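(* Let $\mathfrak{h}^s$ be a Hilbert space of dimension $d_s$ with orthonormal basis $|1\rangle,\dots,|d_s\rangle$, viewed as the fundamental representation of $\mathfrak{su}(\mathfrak{h}^s)$, and let $\hat{H}^1,\dots,\hat{H}^{d_s-1}$ be a Cartan subalgebra basis (a basis of the traceless operators diagonal in this basis). On $\bigotimes_{x=1}^N\mathfrak{h}^s_x$ let $\hat{H}^i_x$ denote $\hat{H}^i$ acting on site $x$ and $\hat{H}^i_{\mathrm{tot}}=\sum_{x=1}^N\hat{H}^i_x$. (1) Any linear operator $\hat{O}$ on $\bigotimes_{x=1}^N\mathfrak{h}^s_x$ commuting with all $\hat{H}^i_{\mathrm{tot}}$ ($1\le i\le d_s-1$) is a linear combination of operators of the form $\hat{p}\,\hat{\sigma}$, where $\hat{p}$ lies in the unital algebra generated by $\{\hat{H}^i_x:1\le i\le d_s-1,\ 1\le x\le N\}$ and $\sigma\in\mathfrak{S}_N$. (2) If $d_s=2$, then any linear operator $\hat{O}$ on $\bigotimes_{x=1}^N\mathfrak{h}^s_x$ can be written as $\hat{O}=\hat{O}_++\hat{O}_-$, where $\hat{O}_+$ is a linear combination of operators $\hat{p}\,\hat{\sigma}$ with $\hat{p}$ in the unital algebra generated by $\{\hat{\sigma}^3_x,\hat{\sigma}^+_x:1\le x\le N\}$ and $\sigma\in\mathfrak{S}_N$, and $\hat{O}_-$ is a linear combination of operators $\hat{p}\,\hat{\sigma}$ with $\hat{p}$ in the unital algebra generated by $\{\hat{\sigma}^3_x,\hat{\sigma}^-_x:1\le x\le N\}$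 and $\sigma\in\mathfrak{S}_N$.
   Context: For $\sigma\in\mathfrak{S}_N$, $\hat{\sigma}$ denotes the operator permuting tensor factors, $\hat{\sigma}\,|e_1\rangle\otimes\cdots\otimes|e_N\rangle=|e_{\sigma(1)}\rangle\otimes\cdots\otimes|e_{\sigma(N)}\rangle$. For $d_s=2$, $\hat{\sigma}^3$ is the Pauli-$z$ operator and $\hat{\sigma}^\pm$ the spin raising/lowering operators; a subscript $x$ means acting on site $x$. *)

From HB Require Import structures.
From mathcomp Require Import all_boot all_order all_fingroup all_algebra.
Set Implicit Arguments. Unset Strict Implicit. Unset Printing Implicit Defensive.
Import Order.TTheory GRing.Theory Num.Theory.
Local Open Scope ring_scope.

Section Defs.
Variable C : numClosedFieldType.

(* Basis configurations of the N-site chain: c x = index of the basis vector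
   at site x (sites and basis labels are 0-based). *)
Definition config (d N : nat) := {ffun 'I_N -> 'I_d}.
Definition dimT (d N : nat) := #|config d N|.
(* operators on the tensor product, as matrices in the product basis *)
Definition op (d N : nat) := 'M[C]_(dimT d N).
Definition cfg (d N : nat) (i : 'I_(dimT d N)) : config d N := enum_val i.

(* single-site operator A acting on site x *)
Definition site_op (d N : nat) (A : 'M[C]_d) (x : 'I_N) : op d N :=
  \matrix_(i, j) (A (cfg i x) (cfg j x) *
                  ([forall y : 'I_N, (y != x) ==> (cfg i y == cfg j y)] : bool)%:R).

(* sigma-hat |e_{c 1} ... e_{c N}> = |e_{c (sigma 1)} ... e_{c (sigma N)}> *)
Definition perm_op (d N : nat) (s : 'S_N) : op d N :=
  \matrix_(i, j) ((cfg i == [ffun x => cfg j (s x)]) : bool)%:R.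

Definition Htot (d N : nat) (H : 'I_d.-1 -> 'M[C]_d) (k : 'I_d.-1) : op d N :=
  \sum_(x < N) site_op (H k) x.

Definition cartan_basis (d : nat) (H : 'I_d.-1 -> 'M[C]_d) : Prop :=
  (forall k, is_diag_mx (H k) /\ \tr (H k) = 0) /\
  (forall a : 'I_d.-1 -> C, \sum_k a k *: H k = 0 -> forall k, a k = 0) /\
  (forall D : 'M[C]_d, is_diag_mx D -> \tr D = 0 ->
     exists a : 'I_d.-1 -> C, D = \sum_k a k *: H k).

Inductive in_alg_gen (n : nat) (S : 'M[C]_n -> Prop) : 'M[C]_n -> Prop :=
  | ag_gen A : S A -> in_alg_gen S A
  | ag_one : in_alg_gen S 1%:M
  | ag_add A B : in_alg_gen S A -> in_alg_gen S B -> in_alg_gen S (A + B)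
  | ag_scale (a : C) A : in_alg_gen S A -> in_alg_gen S (a *: A)
  | ag_mul A B : in_alg_gen S A -> in_alg_gen S B -> in_alg_gen S (A *m B).

Inductive in_span (n : nat) (S : 'M[C]_n -> Prop) : 'M[C]_n -> Prop :=
  | sp_zero : in_span S 0
  | sp_gen A : S A -> in_span S A
  | sp_add A B : in_span S A -> in_span S B -> in_span S (A + B)
  | sp_scale (a : C) A : in_span S A -> in_span S (a *: A).

Definition alg_perm (d N : nat) (G : op d N -> Prop) : op d N -> Prop :=
  fun M => exists (p : op d N) (s : 'S_N), in_alg_gen G p /\ M = p *m perm_op d s.

Definition cartan_gens (d N : nat) (H : 'I_d.-1 -> 'M[C]_d) : op d N -> Prop :=
  fun M => exists (k : 'I_d.-1) (x : 'I_N), M = site_op (H k) x.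

(* Pauli matrices on C^2, basis |1> = index 0, |2> = index 1 *)
Definition sigma3 : 'M[C]_2 :=
  \matrix_(i, j) (if i == j then (if i == 0 :> nat then 1 else -1) else 0).
Definition sigmap : 'M[C]_2 :=
  \matrix_(i, j) (((i == 0 :> nat) && (j == 1 :> nat)) : bool)%:R.
Definition sigmam : 'M[C]_2 :=
  \matrix_(i, j) (((i == 1 :> nat) && (j == 0 :> nat)) : bool)%:R.

Definition pm_gens (N : nat) (B : 'M[C]_2) : op 2 N -> Prop :=
  fun M => exists x : 'I_N, M = site_op sigma3 x \/ M = site_op B x.

End Defs.

From HB Require Import structures.
From mathcomp Require Import all_boot all_order all_fingroup all_algebra.
Set Implicit Arguments. Unset Strict Implicit. Unset Printing Implicit Defensive.
Import Order.TTheory GRing.Theory Num.Theory.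
Local Open Scope ring_scope.

(* Expand an operator in the matrix units E_ij = |c_i><c_j| of the product
   basis. If c_i = c_j o s then E_ij = (prod_x |c_i x><c_j (s x)|_x) s-hat,
   and each factor is a site operator.
   (1) Commuting with the diagonal H_tot^k forces every nonzero entry O_ij
   to have sum_x H^k(c_i x) = sum_x H^k(c_j x); since the H^k span the
   traceless diagonal operators, c_i and c_j then have the same occupation
   numbers, i.e. differ by a permutation, and the diagonal factors
   |a><a| = (|a><a| - 1/d) + 1/d lie in the algebra generated by the H^k_x.
   (2) For d = 2 any two configurations can be permuted so that one
   dominates the other pointwise: then every factor is diagonal, hence a
   polynomial in sigma3_x, or is sigma+_x (resp. sigma-_x). *)

Definition occupation N (T : eqType) (c : 'I_N -> T) (a : T) : nat :=
  \sum_(x < N) (c x == a).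

Lemma count_mem_mktuple N (T : eqType) (c : 'I_N -> T) a :
  count_mem a [tuple c x | x < N] = occupation c a.
Proof.
rewrite /occupation count_map -sum1_count big_mkcond /= big_enum /=.
by apply: eq_bigr => x _; case: (c x == a).
Qed.

Lemma perm_of_occupation N (T : eqType) (c c' : 'I_N -> T) :
  (forall a, occupation c a = occupation c' a) ->
  exists s : 'S_N, forall x, c x = c' (s x).
Proof.
move=> eq_occ; have : perm_eq [tuple c x | x < N] [tuple c' x | x < N].
  by apply/allP => a _ /=; rewrite !count_mem_mktuple eq_occ.
case/tuple_permP => s def_c; exists s => x.
have eq_t : [tuple c x | x < N] = [tuple tnth [tuple c' x | x < N] (s y) | y < N]
  := val_inj def_c.
by have := congr1 (fun t => tnth t x) eq_t; rewrite !tnth_mktuple.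
Qed.

Section Spans.
Variables (C : numClosedFieldType) (n : nat) (S : 'M[C]_n -> Prop).

Lemma in_span_sum (I : Type) (r : seq I) (P : pred I) (F : I -> 'M[C]_n) :
  (forall i, P i -> in_span S (F i)) -> in_span S (\sum_(i <- r | P i) F i).
Proof. by move=> SF; apply: big_ind => //; [exact: sp_zero | exact: sp_add]. Qed.

Lemma in_alg_gen_sum (I : Type) (r : seq I) (P : pred I) (F : I -> 'M[C]_n) :
  (forall i, P i -> in_alg_gen S (F i)) -> in_alg_gen S (\sum_(i <- r | P i) F i).
Proof.
move=> SF; apply: big_ind => //; last exact: ag_add.
by rewrite -(scale0r 1%:M); apply/ag_scale/ag_one.
Qed.

Lemma in_span_matrix_units (O : 'M[C]_n) :
  (forall i j, O i j != 0 -> S (delta_mx i j)) -> in_span S O.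
Proof.
move=> SO; rewrite (matrix_sum_delta O).
apply: in_span_sum => i _; apply: in_span_sum => j _.
have [->|nz] := eqVneq (O i j) 0; first by rewrite scale0r; exact: sp_zero.
exact/sp_scale/sp_gen/SO.
Qed.

End Spans.

Lemma diag_mx_commute_entry (R : idomainType) n (O D : 'M[R]_n) i j :
  is_diag_mx D -> O *m D = D *m O -> O i j != 0 -> D i i = D j j.
Proof.
move=> /is_diag_mxP D_diag comm; have := congr1 (fun M : 'M_n => M i j) comm.
rewrite !mxE (bigD1 j) //= big1 => [|k kj]; last by rewrite D_diag ?mulr0 // val_eqE.
rewrite (bigD1 i) //= big1 => [|k ki]; last by rewrite D_diag ?mul0r // val_eqE eq_sym.
rewrite !addr0 mulrC => /eqP; rewrite -subr_eq0 -mulrBl mulf_eq0 subr_eq0 => + nz.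
by rewrite (negPf nz) orbF => /eqP.
Qed.

Section ProductBasis.
Variables (C : numClosedFieldType) (d N : nat).
Local Notation op := (op C d N).
Local Notation config := (config d N).

Definition idx (c : config) : 'I_(dimT d N) := enum_rank c.

Lemma cfgK (c : config) : cfg (idx c) = c.
Proof. exact: enum_rankK. Qed.

Lemma idxK (i : 'I_(dimT d N)) : idx (cfg i) = i.
Proof. exact: enum_valK. Qed.

Lemma cfg_inj : injective (@cfg d N).
Proof. by move=> i j eq_ij; rewrite -(idxK i) -(idxK j) eq_ij. Qed.

Lemma cfg_eq_off_site (i j : 'I_(dimT d N)) (x : 'I_N) :
  [forall y, (y != x) ==> (cfg i y == cfg j y)] -> cfg i x = cfg j x -> i = j.
Proof.
move=> /forallP eq_off eq_x; apply/cfg_inj/ffunP => y.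
by have [->//|yx] := eqVneq y x; apply/eqP; have := eq_off y; rewrite yx.
Qed.

Definition set_site (c : config) (x : 'I_N) (a : 'I_d) : config :=
  [ffun y => if y == x then a else c y].

Lemma site_op_delta_mul (a b : 'I_d) (x : 'I_N) (i j : 'I_(dimT d N)) :
  site_op (delta_mx a b : 'M[C]_d) x *m delta_mx i j =
  if cfg i x == b then delta_mx (idx (set_site (cfg i) x a)) j else 0.
Proof.
apply/matrixP => k l; rewrite !mxE (bigD1 i) //= big1 => [|m /negPf mi]; last first.
  by rewrite !mxE mi mulr0.
rewrite !mxE !eqxx /= addr0; case: (cfg i x == b); last by rewrite mxE andbF !mul0r.
rewrite mxE andbT -!natrM !mulnb; congr (_ && _)%:R.
apply/idP/eqP => [/andP[/eqP k_x eq_off]|->]; last first.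
  rewrite cfgK ffunE !eqxx /=; apply/forallP => y; apply/implyP => yx.
  by rewrite ffunE (negPf yx).
apply: cfg_eq_off_site (x) _ _; last by rewrite cfgK ffunE eqxx.
apply/forallP => y; apply/implyP => yx; rewrite cfgK ffunE (negPf yx).
by have /forallP/(_ y) := eq_off; rewrite yx.
Qed.

Definition site_units (a b : config) (s : seq 'I_N) : op :=
  foldr (fun x M => site_op (delta_mx (a x) (b x) : 'M[C]_d) x *m M) 1%:M s.

Lemma site_units_mul_delta a b s (i j : 'I_(dimT d N)) : uniq s ->
  site_units a b s *m delta_mx i j =
  if all (fun x => cfg i x == b x) s
  then delta_mx (idx [ffun y => if y \in s then a y else cfg i y]) j else 0.
Proof.
elim: s => [_|x s IHs /andP[xNs uniq_s]] /=.
  rewrite mul1mx; congr delta_mx; apply/cfg_inj/ffunP => y.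
  by rewrite cfgK ffunE.
rewrite -mulmxA IHs //; case: (all _ s); last by rewrite andbF mulmx0.
rewrite andbT site_op_delta_mul cfgK ffunE (negPf xNs).
case: (cfg i x == b x) => //; congr (delta_mx (idx _) j).
by apply/ffunP => y; rewrite !ffunE in_cons; case: eqP => [->|].
Qed.

Lemma site_units_enum a b : site_units a b (enum 'I_N) = delta_mx (idx a) (idx b).
Proof.
rewrite -[LHS]mulmx1 mx1_sum_delta mulmx_sumr (bigD1 (idx b)) //= big1 => [|l lNb].
  rewrite site_units_mul_delta ?enum_uniq // cfgK addr0.
  rewrite (introT allP) => [|x _]; last exact: eqxx.
  by congr (delta_mx (idx _) _); apply/ffunP => y; rewrite ffunE mem_enum.
rewrite site_units_mul_delta ?enum_uniq //; case: allP => // eq_b.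
case/eqP: lNb; rewrite -[l]idxK; congr idx; apply/ffunP => y.
by apply/eqP/eq_b; rewrite mem_enum.
Qed.

Lemma site_opD (A B : 'M[C]_d) x : site_op (A + B) x = site_op A x + site_op B x :> op.
Proof. by apply/matrixP => i j; rewrite !mxE mulrDl. Qed.

Lemma site_opZ (a : C) (A : 'M[C]_d) x : site_op (a *: A) x = a *: site_op A x :> op.
Proof. by apply/matrixP => i j; rewrite !mxE mulrA. Qed.

Lemma site_op0 x : site_op (0 : 'M[C]_d) x = 0 :> op.
Proof. by apply/matrixP => i j; rewrite !mxE mul0r. Qed.

Lemma site_op_sum (I : Type) (r : seq I) (F : I -> 'M[C]_d) x :
  site_op (\sum_(k <- r) F k) x = \sum_(k <- r) site_op (F k) x :> op.
Proof.
exact: (big_morph (fun A => site_op A x : op) (fun A B => site_opD A B x) (site_op0 x)).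
Qed.

Lemma site_op1 x : site_op (1%:M : 'M[C]_d) x = 1%:M :> op.
Proof.
apply/matrixP => i j; rewrite !mxE -natrM mulnb; congr (nat_of_bool _)%:R.
apply/idP/eqP => [/andP[/eqP eq_x eq_off]|<-]; first exact: cfg_eq_off_site eq_off eq_x.
by rewrite eqxx; apply/forallP => y; apply/implyP.
Qed.

Lemma site_op_offdiag (A : 'M[C]_d) x (i j : 'I_(dimT d N)) :
  is_diag_mx A -> i != j -> site_op A x i j = 0.
Proof.
move=> /is_diag_mxP A_diag ij; rewrite mxE.
have [eq_x|neq_x] := eqVneq (cfg i x) (cfg j x); last by rewrite A_diag ?mul0r.
case: forallP => [eq_off|_]; last by rewrite mulr0.
by case/eqP: ij; apply: cfg_eq_off_site eq_x; apply/forallP.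
Qed.

Lemma site_op_diag (A : 'M[C]_d) x (i : 'I_(dimT d N)) :
  site_op A x i i = A (cfg i x) (cfg i x).
Proof.
by rewrite mxE (introT forallP) ?mulr1 // => y; apply/implyP.
Qed.

Lemma delta_mul_perm (s : 'S_N) (i j : 'I_(dimT d N)) :
  delta_mx i (idx [ffun x => cfg j (s x)]) *m perm_op C d s = delta_mx i j.
Proof.
apply/matrixP => k l; rewrite !mxE (bigD1 (idx [ffun x => cfg j (s x)])) //=.
rewrite big1 => [|m /negPf mNj]; last by rewrite !mxE mNj andbF mul0r.
rewrite !mxE !eqxx andbT addr0 cfgK -natrM mulnb; congr (_ && _)%:R.
apply/eqP/eqP => [eq_s|->//]; apply/cfg_inj/ffunP => y.
by have /ffunP/(_ (s^-1 y)%g) := eq_s; rewrite !ffunE permKV.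
Qed.

Lemma alg_perm_delta (G : op -> Prop) (s : 'S_N) (i j : 'I_(dimT d N)) :
  (forall x, in_alg_gen G (site_op (delta_mx (cfg i x) (cfg j (s x)) : 'M[C]_d) x)) ->
  alg_perm G (delta_mx i j).
Proof.
move=> G_units; exists (delta_mx i (idx [ffun x => cfg j (s x)])), s.
split; last by rewrite delta_mul_perm.
rewrite -[i in delta_mx i]idxK -site_units_enum.
elim: (enum _) => [|x r IHr] /=; first exact: ag_one.
by rewrite ffunE; exact: ag_mul (G_units x) IHr.
Qed.

End ProductBasis.

Section CartanCommutant.
Variables (C : numClosedFieldType) (d N : nat) (H : 'I_d.-1 -> 'M[C]_d).
Hypothesis H_basis : cartan_basis H.

Definition weight (c : config d N) (A : 'M[C]_d) : C := \sum_(x < N) A (c x) (c x).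

Lemma weight_lin c (al : 'I_d.-1 -> C) :
  weight c (\sum_k al k *: H k) = \sum_k al k * weight c (H k).
Proof.
rewrite /weight; under eq_bigr do rewrite summxE; rewrite exchange_big.
by apply: eq_bigr => k _; rewrite mulr_sumr; apply: eq_bigr => x _; rewrite mxE.
Qed.

Lemma traceless_unit_in_cartan (a : 'I_d) :
  exists al : 'I_d.-1 -> C, delta_mx a a - d%:R^-1 *: 1%:M = \sum_k al k *: H k.
Proof.
have d_neq0 : d%:R != 0 :> C by rewrite pnatr_eq0 -lt0n (leq_ltn_trans _ (ltn_ord a)).
case: H_basis => _ [_]; apply.
  apply/is_diag_mxP => p q; rewrite val_eqE => pq; rewrite !mxE (negPf pq) mulr0 subr0.
  by apply/eqP; rewrite pnatr_eq0 eqb0; apply: contra pq => /andP[/eqP-> /eqP->].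
rewrite mxtraceD raddfN /= mxtraceZ mxtrace1 mulVf // /mxtrace (bigD1 a) //=.
by rewrite big1 => [|p /negPf pa]; rewrite mxE ?eqxx ?addr0 ?subrr // pa.
Qed.

Lemma weight_unit_shift c (a : 'I_d) :
  weight c (delta_mx a a - d%:R^-1 *: 1%:M) = (occupation c a)%:R - N%:R / d%:R.
Proof.
have -> : N%:R / d%:R = \sum_(x < N) d%:R^-1 :> C.
  by rewrite sumr_const card_ord -[RHS]mulr_natl.
rewrite /weight /occupation natr_sum -sumrB; apply: eq_bigr => x _.
by rewrite !mxE eqxx andbb mulr1.
Qed.

Lemma occupation_of_weight (c c' : config d N) :
  (forall k, weight c (H k) = weight c' (H k)) ->
  forall a, occupation c a = occupation c' a.
Proof.
move=> eq_w a; have [al def_al] := traceless_unit_in_cartan a.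
apply/eqP; rewrite -(eqr_nat C); apply/eqP/(addIr (- (N%:R / d%:R))).
by rewrite -!weight_unit_shift def_al !weight_lin; apply: eq_bigr => k _; rewrite eq_w.
Qed.

Lemma site_diag_unit_in_cartan_alg (a : 'I_d) (x : 'I_N) :
  in_alg_gen (@cartan_gens C d N H) (site_op (delta_mx a a : 'M[C]_d) x).
Proof.
have [al def_al] := traceless_unit_in_cartan a.
rewrite -[delta_mx a a](subrK (d%:R^-1 *: 1%:M)) def_al site_opD site_opZ site_op1.
apply: ag_add; last exact/ag_scale/ag_one.
rewrite site_op_sum; apply: in_alg_gen_sum => k _.
by rewrite site_opZ; apply/ag_scale/ag_gen; exists k, x.
Qed.

Lemma Htot_is_diag k : is_diag_mx (Htot N H k).
Proof.
apply/is_diag_mxP => i j; rewrite val_eqE => ij; rewrite summxE big1 // => x _.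
by apply: site_op_offdiag ij; case: H_basis => /(_ k)[].
Qed.

Lemma Htot_diag k (i : 'I_(dimT d N)) : Htot N H k i i = weight (cfg i) (H k).
Proof. by rewrite summxE; apply: eq_bigr => x _; rewrite site_op_diag. Qed.

Lemma commutant_Htot_in_span (O : op C d N) :
  (forall k, O *m Htot N H k = Htot N H k *m O) ->
  in_span (alg_perm (@cartan_gens C d N H)) O.
Proof.
move=> O_comm; apply: in_span_matrix_units => i j O_ij.
have eq_w k : weight (cfg i) (H k) = weight (cfg j) (H k).
  rewrite -!Htot_diag; apply: diag_mx_commute_entry O_ij; first exact: Htot_is_diag.
  exact: O_comm.
have [s eq_cfg] := perm_of_occupation (occupation_of_weight eq_w).
by apply: (alg_perm_delta (s := s)) => x; rewrite -eq_cfg; apply: site_diag_unit_in_cartan_alg.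
Qed.

End CartanCommutant.

Lemma ord2_cases (a : 'I_2) : a = ord0 \/ a = ord_max.
Proof. by case: a => [[|[|]]] // ?; [left | right]; apply: val_inj. Qed.

Section TwoValuedConfigurations.
Variable N : nat.

Definition ones_last (k : nat) (x : 'I_N) : 'I_2 :=
  if (N - k <= x)%N then ord_max else ord0.

Lemma occupation_ord2 (c : 'I_N -> 'I_2) :
  (occupation c ord0 + occupation c ord_max)%N = N.
Proof.
rewrite /occupation -big_split /= -[RHS]card_ord -sum1_card.
by apply: eq_bigr => x _; case: (ord2_cases (c x)) => ->.
Qed.

Lemma occupation_ones_last k : (k <= N)%N -> occupation (ones_last k) ord_max = k.
Proof.
move=> le_kN; rewrite /occupation /ones_last.
rewrite (eq_bigr (fun x : 'I_N => (N - k <= x)%N : nat)) => [|x _]; last by case: ifP.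
rewrite -(big_mkord xpredT (fun x => (N - k <= x)%N : nat)).
rewrite (big_cat_nat (leq0n (N - k)) (leq_subr k N)) /= big_nat_cond big1 => [|x].
  rewrite add0n big_nat_cond (eq_bigr (fun=> 1%N)) => [|x /andP[/andP[-> _] _]] //.
  by rewrite -big_nat_cond sum_nat_const_nat muln1 subKn.
by case/andP => /andP[_]; rewrite ltnNge => /negPf->.
Qed.

Lemma perm_ones_last (c : 'I_N -> 'I_2) :
  exists t : 'S_N, forall x, c x = ones_last (occupation c ord_max) (t x).
Proof.
apply: perm_of_occupation => a.
have le_occ : (occupation c ord_max <= N)%N.
  by rewrite -[X in (_ <= X)%N](occupation_ord2 c) leq_addl.
have occ_last := occupation_ones_last le_occ.
case: (ord2_cases a) => ->; last by rewrite occ_last.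
apply/eqP; rewrite -(eqn_add2r (occupation c ord_max)) occupation_ord2.
by rewrite -[X in (_ + X)%N]occ_last occupation_ord2.
Qed.

Lemma ones_last_mono k k' x : (k <= k')%N -> (ones_last k x <= ones_last k' x)%N.
Proof.
rewrite /ones_last => le_k; case: ifP => // le_x.
by rewrite (leq_trans _ le_x) // leq_sub2l.
Qed.

Lemma perm_dominated (c c' : 'I_N -> 'I_2) :
  (occupation c ord_max <= occupation c' ord_max)%N ->
  exists s : 'S_N, forall x, (c x <= c' (s x))%N.
Proof.
move=> le_occ; have [t def_c] := perm_ones_last c; have [t' def_c'] := perm_ones_last c'.
exists (t * t'^-1)%g => x.
by rewrite def_c def_c' permM permKV; apply: ones_last_mono.
Qed.

End TwoValuedConfigurations.

Section PauliAlgebras.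
Variables (C : numClosedFieldType) (N : nat).

Lemma unit00_sigma3 : delta_mx ord0 ord0 = 2%:R^-1 *: (1%:M + sigma3 C) :> 'M[C]_2.
Proof.
have two_neq0 : 2%:R != 0 :> C by rewrite pnatr_eq0.
apply/matrixP => i j; rewrite !mxE.
by case: (ord2_cases i) => ->; case: (ord2_cases j) => -> /=;
  rewrite ?addr0 ?subrr ?mulr0 // mulVf.
Qed.

Lemma unit11_sigma3 : delta_mx ord_max ord_max = 2%:R^-1 *: (1%:M - sigma3 C) :> 'M[C]_2.
Proof.
have two_neq0 : 2%:R != 0 :> C by rewrite pnatr_eq0.
apply/matrixP => i j; rewrite !mxE.
by case: (ord2_cases i) => ->; case: (ord2_cases j) => -> /=;
  rewrite ?subr0 ?subrr ?opprK ?mulr0 // mulVf.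
Qed.

Lemma unit01_sigmap : delta_mx ord0 ord_max = sigmap C.
Proof.
by apply/matrixP => i j; rewrite !mxE; case: (ord2_cases i) => ->; case: (ord2_cases j) => ->.
Qed.

Lemma unit10_sigmam : delta_mx ord_max ord0 = sigmam C.
Proof.
by apply/matrixP => i j; rewrite !mxE; case: (ord2_cases i) => ->; case: (ord2_cases j) => ->.
Qed.

Lemma site_unit_in_pm_alg (B : 'M[C]_2) (x : 'I_N) (a b : 'I_2) :
  a = b \/ delta_mx a b = B -> in_alg_gen (@pm_gens C N B) (site_op (delta_mx a b) x).
Proof.
have sigma3_gen : in_alg_gen (@pm_gens C N B) (site_op (sigma3 C) x).
  by apply: ag_gen; exists x; left.
case=> [<-|<-]; last by apply: ag_gen; exists x; right.
have [->|->] := ord2_cases a; rewrite ?unit00_sigma3 ?unit11_sigma3 -?scaleN1r.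
all: rewrite site_opZ site_opD site_op1 ?site_opZ; apply/ag_scale/ag_add; first exact: ag_one.
  exact: sigma3_gen.
exact: ag_scale.
Qed.

Lemma site_le_unit_in_sigmap_alg (x : 'I_N) (a b : 'I_2) :
  (a <= b)%N -> in_alg_gen (@pm_gens C N (sigmap C)) (site_op (delta_mx a b) x).
Proof.
move=> le_ab; apply: site_unit_in_pm_alg.
by case: (ord2_cases a) (ord2_cases b) le_ab => -> [] ->; rewrite ?unit01_sigmap; auto.
Qed.

Lemma site_ge_unit_in_sigmam_alg (x : 'I_N) (a b : 'I_2) :
  (b <= a)%N -> in_alg_gen (@pm_gens C N (sigmam C)) (site_op (delta_mx a b) x).
Proof.
move=> le_ba; apply: site_unit_in_pm_alg.
by case: (ord2_cases a) (ord2_cases b) le_ba => -> [] ->; rewrite ?unit10_sigmam; auto.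
Qed.

Lemma pm_decomposition (O : op C 2 N) :
  exists Op Om : op C 2 N,
    O = Op + Om /\
    in_span (alg_perm (@pm_gens C N (sigmap C))) Op /\
    in_span (alg_perm (@pm_gens C N (sigmam C))) Om.
Proof.
pose P (i j : 'I_(dimT 2 N)) := (occupation (cfg i) ord_max <= occupation (cfg j) ord_max)%N.
exists (\matrix_(i, j) if P i j then O i j else 0).
exists (\matrix_(i, j) if P i j then 0 else O i j).
split; first by apply/matrixP => i j; rewrite !mxE; case: (P i j); rewrite ?addr0 ?add0r.
split; apply: in_span_matrix_units => i j; rewrite mxE; case: ifP => [le_ij|/negbT gt_ij];
  rewrite ?eqxx // => _.
  have [s le_s] := perm_dominated le_ij.
  by apply: (alg_perm_delta (s := s)) => x; apply/site_le_unit_in_sigmap_alg/le_s.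
move: gt_ij; rewrite -ltnNge => /ltnW/perm_dominated[s le_s].
apply: (alg_perm_delta (s := s^-1%g)) => x; apply: site_ge_unit_in_sigmam_alg.
by have := le_s (s^-1 x)%g; rewrite permKV.
Qed.

End PauliAlgebras.

Theorem lemma6p1 (C : numClosedFieldType) :
  (forall (d N : nat) (H : 'I_d.-1 -> 'M[C]_d), cartan_basis H ->
     forall O : op C d N,
       (forall k : 'I_d.-1, O *m Htot N H k = Htot N H k *m O) ->
       in_span (alg_perm (@cartan_gens C d N H)) O)
  /\
  (forall (N : nat) (O : op C 2 N),
     exists Op Om : op C 2 N,
       O = Op + Om /\
       in_span (alg_perm (@pm_gens C N (sigmap C))) Op /\
       in_span (alg_perm (@pm_gens C N (sigmam C))) Om).
Proof.
split=> [d N H H_basis O|N O]; first exact: commutant_Htot_in_span.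
exact: pm_decomposition.
Qed.
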